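(* Let $1<p<\infty$, $\alpha>0$ and $\sigma=\frac{p}{p-1}$. There exists a constant $c_{\alpha p}>0$ such that for every measurable $f$ on $\Omega$, $$\sup_{0<t<1}t^{-1}(1-\log t)^{-\alpha/p}\int_0^{t^\sigma}f_*(s)\,ds\ \le\ c_{\alpha p}\sup_{0<t<1}(1-\log t)^{-\alpha/p}\Bigl(\int_t^1 f_*^p(s)\,ds\Bigr)^{1/p}.$$
   Context: $\Omega\subset\mathbb R^n$ is a bounded open set with $|\Omega|=1$; $f_*$ is the decreasing rearrangement of $|f|$ on $(0,1)$; $\log$ is the natural logarithm. *)

From HB Require Import structures.
From mathcomp Require Import all_boot all_order all_algebra.
From mathcomp Require Import all_classical all_reals all_analysis.
Set Implicit Arguments. Unset Strict Implicit. Unset Printing Implicit Defensive.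
Import Order.TTheory GRing.Theory Num.Theory.
Local Open Scope classical_set_scope.
Local Open Scope ring_scope.

Definition distrib_fun {d} {T : measurableType d} {R : realType}
  (mu : {measure set T -> \bar R}) (D : set T) (f : T -> R) (lam : R) : \bar R :=
  mu (D `&` [set x | lam < `|f x|]).

Definition decr_rearr {d} {T : measurableType d} {R : realType}
  (mu : {measure set T -> \bar R}) (D : set T) (f : T -> R) (s : R) : \bar R :=
  ereal_inf [set lam%:E | lam in
     [set lam : R | 0 <= lam /\ (distrib_fun mu D f lam <= s%:E)%E]].

From HB Require Import structures.
From mathcomp Require Import all_boot all_order all_algebra.
From mathcomp Require Import all_classical all_reals all_analysis.
From mathcomp Require Import ring lra.
From mathcomp Require Import measurable_realfun.
Set Implicit Arguments.
Unset Strict Implicit.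
Unset Printing Implicit Defensive.
Import Order.TTheory GRing.Theory Num.Theory.
Import numFieldNormedType.Exports.
Local Open Scope classical_set_scope.
Local Open Scope ring_scope.

(* Write g := f_* (nonnegative and nonincreasing), beta := alpha/p, and let K be
   the supremum on the right.  Monotonicity of g on ]s/2, s[ gives
   g(s)^p s/2 <= int_{s/2}^1 g^p <= K^p (1 - log(s/2))^alpha, so
   g(s) <~ K s^(-1/p) (1 - log(s/2))^beta.  For s <= T < 1 the logarithm is
   traded for an arbitrarily small power:
   (1 - log s)^beta <~ (1 - log T)^beta (T/s)^delta.
   Choosing 1/p + delta < 1 makes s^(-1/p-delta) integrable at 0, whence
   int_0^T g <~ K (1 - log T)^beta T^(1-1/p); at T = t^sigma this power is t and
   1 - log T <= sigma (1 - log t). *)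

Section ge0_integral_monotone.
Local Open Scope ereal_scope.
Context d (T : measurableType d) (R : realType).
Variable mu : {measure set T -> \bar R}.

(* Unlike [ge0_le_integral] and [ge0_subset_integral], no measurability is
   needed: a nonnegative integral is a supremum over the simple functions
   below the integrand. *)
Lemma ge0_le_integral_nomeas (D : set T) (f1 f2 : T -> \bar R) :
  (forall x, D x -> 0 <= f1 x) -> (forall x, D x -> f1 x <= f2 x) ->
  \int[mu]_(x in D) f1 x <= \int[mu]_(x in D) f2 x.
Proof.
move=> f10 f12.
have f20 x : D x -> 0 <= f2 x by move=> Dx; exact: le_trans (f10 x Dx) (f12 x Dx).
rewrite !ge0_integralE//; apply: ereal_sup_le => _ [h hf <-]; exists h => //= x.
apply: le_trans (hf x) _; rewrite /patch; case: ifP => // /set_mem; exact: f12.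
Qed.

Lemma ge0_subset_integral_nomeas (A B : set T) (f : T -> \bar R) :
  A `<=` B -> (forall x, B x -> 0 <= f x) ->
  \int[mu]_(x in A) f x <= \int[mu]_(x in B) f x.
Proof.
move=> AB f0; rewrite !ge0_integralE//; last by move=> x /AB; exact: f0.
apply: ereal_sup_le => _ [h hf <-]; exists h => //= x.
apply: le_trans (hf x) _; rewrite /patch; case: ifPn => [/set_mem Ax|_].
  by rewrite ifT //; apply/mem_set/AB.
by case: ifPn => // /set_mem Bx; exact: f0.
Qed.

End ge0_integral_monotone.

Section powR_integral.
Variable R : realType.
Local Notation mu := (@lebesgue_measure R).

Lemma is_derive_mul_powR (c r x : R) : 0 < x ->
  is_derive x 1 (fun y => c * y `^ r) (c * (r * x `^ (r - 1))).
Proof. by move=> x0; have := is_deriveZ c (is_derive1_powR r x0). Qed.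

Lemma derivable_mul_powR (c r x : R) : 0 < x ->
  derivable (fun y => c * y `^ r) x 1.
Proof. by move=> x0; have [] := is_derive_mul_powR c r x0. Qed.

Lemma continuous_mul_powR (c r x : R) : 0 < x ->
  {for x, continuous (fun y : R => c * y `^ r)}.
Proof.
move=> x0; apply/differentiable_continuous; rewrite -derivable1_diffP.
exact: derivable_mul_powR.
Qed.

Lemma integral_mul_powR_itvcc_le (c b e T : R) : 0 <= c -> b < 1 -> 0 < e -> e < T ->
  (\int[mu]_(x in `[e, T]) (c * x `^ (- b))%:E <= (c * (T `^ (1 - b) / (1 - b)))%:E)%E.
Proof.
move=> c0 b1 e0 eT; have b10 : 0 < 1 - b by rewrite subr_gt0.
rewrite (@continuous_FTC2 _ _ (fun y => c / (1 - b) * y `^ (1 - b))) //.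
- rewrite -EFinD lee_fin mulrAC -mulrA gerBl//.
  by apply: mulr_ge0; [exact: divr_ge0 c0 (ltW b10)|exact: powR_ge0].
- apply: derivable_within_continuous => x; rewrite in_itv/= => /andP[ex _].
  exact/derivable_mul_powR/(lt_le_trans e0 ex).
- split.
  + move=> x; rewrite in_itv/= => /andP[ex _].
    exact/derivable_mul_powR/(lt_trans e0 ex).
  + exact/cvg_at_right_filter/continuous_mul_powR.
  + exact/cvg_at_left_filter/continuous_mul_powR/(lt_trans e0 eT).
- move=> x; rewrite in_itv/= => /andP[ex _]; have x0 : 0 < x := lt_trans e0 ex.
  have := is_derive_mul_powR (c / (1 - b)) (1 - b) x0.
  move/(@derive_val _ _ _ _ _ _ _); rewrite -derive1E => ->.
  rewrite (_ : 1 - b - 1 = - b); last by ring.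
  by field; rewrite gt_eqF.
Qed.

(* Monotone convergence along the exhaustion of ]0, T[ by [T / (n + 2), T]. *)
Lemma integral_mul_powR_itv0_le (c b T : R) : 0 <= c -> b < 1 -> 0 < T ->
  (\int[mu]_(x in `]0%R, T[) (c * x `^ (- b))%:E <= (c * (T `^ (1 - b) / (1 - b)))%:E)%E.
Proof.
move=> c0 b1 T0; set h := fun x : R => (c * x `^ (- b))%:E.
pose e (n : nat) := T / n.+2%:R.
have e0 n : 0 < e n by rewrite divr_gt0.
have eT n : e n < T by rewrite /e ltr_pdivrMr// ltr_pMr// ltr1n.
have e_nonincr m n : (m <= n)%N -> e n <= e m.
  by move=> mn; rewrite /e ler_pM2l// lef_pV2 ?posrE// ler_nat !ltnS.
pose g n : R -> \bar R := h \_ `[e n, T].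
have h0 x : (0 <= h x)%E by rewrite lee_fin mulr_ge0// powR_ge0.
have mg n : measurable_fun `]0, T[ (g n).
  apply/measurable_restrict => //.
  apply: measurable_funS (_ : measurable_fun setT h) => //.
  exact/measurable_EFinP/measurable_funM.
have g0 n (x : R) : `]0, T[%classic x -> (0 <= g n x)%E.
  by move=> _; rewrite /g /patch; case: ifP.
have g_nd (x : R) : `]0, T[%classic x -> nondecreasing_seq (g^~ x).
  move=> _ m n mn; rewrite /g /patch; case: ifPn => [/set_mem|_]; last by case: ifP.
  rewrite /= in_itv/= => /andP[exm xT]; rewrite ifT//; apply/mem_set.
  by rewrite /= in_itv/= xT andbT (le_trans (e_nonincr _ _ mn)).
have g_cvg := @cvg_monotone_convergence _ _ _ mu _ (measurable_itv _) g mg g0 g_nd.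
have -> : (\int[mu]_(x in `]0%R, T[) h x = \int[mu]_(x in `]0%R, T[) limn (g^~ x))%E.
  apply: eq_integral => x; rewrite inE /= in_itv /= => /andP[x0 xT].
  apply/esym/cvg_lim => //; apply: cvg_near_cst.
  have [N hN] : exists N : nat, T / x < N%:R.
    by exists (Num.truncn (T / x)).+1; rewrite truncnS_gt.
  near=> n; rewrite /g /patch ifT//; apply/mem_set; rewrite /= in_itv /= (ltW xT) andbT.
  rewrite /e ler_pdivrMr// -ler_pdivrMl// mulrC (le_trans (ltW hN))// ler_nat.
  by near: n; exists N => // n /= Nn; rewrite (leq_trans Nn)// leqW.
rewrite -(cvg_lim _ g_cvg)//; apply: lime_le.
  by apply/cvg_ex; eexists; exact: g_cvg.
near=> n; rewrite -integral_mkcondr.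
apply: (@le_trans _ _ (\int[mu]_(x in `[e n, T]) h x)%E).
  by apply: ge0_subset_integral_nomeas => [x []|x _]//; exact: h0.
exact: integral_mul_powR_itvcc_le.
Unshelve. all: by end_near.
Qed.

End powR_integral.

Section log_weight.
Variable R : realType.

Lemma powRV (x r : R) : 0 < x -> x^-1 `^ r = (x `^ r)^-1.
Proof. by move=> x0; rewrite /powR invr_eq0 gt_eqF// lnV ?posrE// mulrN expRN. Qed.

Lemma gt0_powRE (x r : R) : 0 < x -> x `^ r = expR (r * ln x).
Proof. by move=> x0; rewrite /powR gt_eqF. Qed.

Lemma le1D_expR_scaled (m y : R) : 0 < m -> m <= 1 -> 0 <= y ->
  1 + y <= m^-1 * expR (m * y).
Proof.
move=> m0 m1 y0; rewrite -(ler_pM2l m0) mulrA mulfV ?gt_eqF// mul1r.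
have := expR_ge1Dx (m * y); nra.
Qed.

Lemma one_sub_ln_half_le (s T : R) : 0 < s -> s <= T -> T < 1 ->
  1 - ln (s / 2) <= (1 + ln 2) * (1 - ln T) * (1 + (ln T - ln s)).
Proof.
move=> s0 sT T1; have T0 : 0 < T := lt_le_trans s0 sT.
have ln2_ge0 : 0 <= ln (2 : R) by rewrite ln_ge0// ler1n.
have lnT_lt0 : ln T < 0 by rewrite ln_lt0// T0 T1.
have lns_le : ln s <= ln T by rewrite ler_ln ?posrE.
have e1 : 0 <= - ln T * (ln T - ln s) by rewrite mulr_ge0 ?subr_ge0// oppr_ge0 ltW.
have e2 : 0 <= ln 2 * ((1 - ln T) * (1 + (ln T - ln s)) - 1).
  by rewrite mulr_ge0// subr_ge0 -[1]mulr1 ler_pM//; lra.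
rewrite ln_div ?posrE//; nra.
Qed.

Lemma one_sub_ln_half_powR_le (bet del s T : R) :
  0 < bet -> 0 < del -> 0 < s -> s <= T -> T < 1 ->
  (1 - ln (s / 2)) `^ bet <= (1 + ln 2) `^ bet * (1 - ln T) `^ bet *
    ((del / (bet + del)) `^ (- bet) * (T `^ del * s `^ (- del))).
Proof.
move=> b0 d0 s0 sT T1; have T0 : 0 < T := lt_le_trans s0 sT.
have ln2_ge0 : 0 <= ln (2 : R) by rewrite ln_ge0// ler1n.
have lnT_lt0 : ln T < 0 by rewrite ln_lt0// T0 T1.
have lns_le : ln s <= ln T by rewrite ler_ln ?posrE.
set m := del / (bet + del); set y := ln T - ln s.
have m0 : 0 < m by rewrite divr_gt0// addr_gt0.
have m1 : m <= 1 by rewrite ler_pdivrMr ?addr_gt0// mul1r lerDr ltW.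
have mb : m * bet <= del by rewrite mulrAC ler_pdivrMr ?addr_gt0// ler_pM2l//; lra.
have y0 : 0 <= y by rewrite subr_ge0.
have hT : T `^ del * s `^ (- del) = expR (del * y).
  by rewrite !gt0_powRE// -expRD /y; congr expR; ring.
have l2_gt0 : 0 < 1 + ln (2 : R) by lra.
have lT_gt0 : 0 < 1 - ln T by lra.
have h1 : 1 - ln (s / 2) <= (1 + ln 2) * (1 - ln T) * (m^-1 * expR (m * y)).
  apply: (le_trans (one_sub_ln_half_le s0 sT T1)).
  by rewrite ler_pM2l ?mulr_gt0//; exact: le1D_expR_scaled.
have ls_ge0 : 0 <= 1 - ln (s / 2) by rewrite ln_div ?posrE//; lra.
have mV_ge0 : 0 <= m^-1 by rewrite invr_ge0 ltW.
clearbody m; rewrite hT; apply: (le_trans (ge0_ler_powR (ltW b0) _ _ h1)).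
- by rewrite nnegrE.
- by rewrite nnegrE !mulr_ge0 ?expR_ge0// ltW.
rewrite !powRM ?mulr_ge0 ?expR_ge0 ?(ltW l2_gt0) ?(ltW lT_gt0)// powRV// -powRN -expRM.
rewrite ler_pM2l ?mulr_gt0 ?powR_gt0// ler_pM2l ?powR_gt0// ler_expR.
by rewrite -mulrA [y * _]mulrC mulrA ler_wpM2r.
Qed.

End log_weight.

Definition tail_const (R : realType) (p bet del : R) : R :=
  2 `^ p^-1 * (1 + ln 2) `^ bet * (del / (bet + del)) `^ (- bet).

Lemma tail_const_gt0 (R : realType) (p bet del : R) :
  0 < bet -> 0 < del -> 0 < tail_const p bet del.
Proof.
move=> b0 d0; have ln2_gt0 : 0 < 1 + ln (2 : R) by rewrite ltr_pwDl// ln_ge0// ler1n.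
by rewrite /tail_const !mulr_gt0 ?powR_gt0 ?divr_gt0// addr_gt0.
Qed.

Section nonincreasing_tail_bound.
Variable R : realType.
Local Notation mu := (@lebesgue_measure R).
Variables (p bet k : R) (g : R -> \bar R).
Hypotheses (p_gt1 : 1 < p) (bet_gt0 : 0 < bet).
Hypothesis g_ge0 : forall s, (0 <= g s)%E.
Hypothesis g_nonincr : forall s s', s <= s' -> (g s' <= g s)%E.
Hypothesis g_tail : forall t, 0 < t < 1 ->
  (((1 - ln t) `^ (- bet))%:E * (\int[mu]_(s in `]t, 1%R[) g s `^ p) `^ p^-1
    <= k%:E)%E.

Let p_gt0 : 0 < p. Proof. exact: lt_trans ltr01 p_gt1. Qed.

Lemma nonincr_powe_le_integral (u s v : R) : 0 < u < s -> s <= v ->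
  (g s `^ p * (s - u)%:E <= \int[mu]_(x in `]u, v[) g x `^ p)%E.
Proof.
move=> /andP[u0 us] sv.
have -> : (g s `^ p * (s - u)%:E = \int[mu]_(x in `]u, s[) cst (g s `^ p) x)%E.
  by rewrite integral_cst//= lebesgue_measure_itv/= lte_fin us -EFinD.
apply: (@le_trans _ _ (\int[mu]_(x in `]u, s[) g x `^ p)%E).
  apply: ge0_le_integral_nomeas => [x _|x]; first exact: poweR_ge0.
  rewrite /= in_itv/= => /andP[_ xs].
  apply: gt0_ler_poweR; rewrite ?in_itv/= ?leey ?g_ge0 ?andbT//; first exact: ltW.
  exact/g_nonincr/ltW.
apply: ge0_subset_integral_nomeas => [x|x _]; last exact: poweR_ge0.
by rewrite /= !in_itv/= => /andP[-> xs]; exact: lt_le_trans xs sv.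
Qed.

Lemma tail_bound_ge0 : 0 <= k.
Proof.
have half01 : 0 < (2^-1 : R) < 1 by rewrite invr_gt0 ltr0n invf_lt1 ?ltr1n.
rewrite -lee_fin; apply: le_trans (g_tail half01).
by rewrite mule_ge0 ?poweR_ge0// lee_fin powR_ge0.
Qed.

(* Nonincreasing [g] is at least [g s] on ]s/2, s[, which the tail bound at
   [s/2] controls. *)
Lemma tail_bound_pointwise (s : R) : 0 < s < 1 ->
  (g s <= (k * 2 `^ p^-1 * s `^ (- p^-1) * (1 - ln (s / 2)) `^ bet)%:E)%E.
Proof.
move=> /andP[s0 s1]; set u := s / 2.
have u0 : 0 < u by rewrite divr_gt0.
have us : u < s by rewrite /u ltr_pdivrMr// ltr_pMr// ltr1n.
have u1 : u < 1 := lt_trans us s1.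
have su : s - u = u by rewrite /u; field.
have hJ : (g s `^ p * (s - u)%:E <= \int[mu]_(x in `]u, 1%R[) g x `^ p)%E.
  by apply: nonincr_powe_le_integral; [rewrite u0 us|exact: ltW].
set J := (\int[mu]_(x in `]u, 1%R[) g x `^ p)%E in hJ.
have J0 : (0 <= J)%E by apply: integral_ge0 => x _; exact: poweR_ge0.
have pV_ge0 : 0 <= p^-1 by rewrite invr_ge0 ltW.
have hJp : ((g s `^ p * (s - u)%:E) `^ p^-1 <= J `^ p^-1)%E.
  apply: gt0_ler_poweR => //; rewrite in_itv/= leey andbT//.
  by rewrite mule_ge0// ?poweR_ge0// lee_fin subr_ge0 ltW.
rewrite poweRM ?poweR_ge0 ?lee_fin ?subr_ge0 ?(ltW us)// -poweRrM mulfV ?gt_eqF//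
  poweRe1// poweR_EFin su in hJp.
have hk := g_tail (introT andP (conj u0 u1)).
have lnu : ln u < 0 by rewrite ln_lt0// u0 u1.
have l0 : 0 < 1 - ln u by rewrite subr_gt0 (lt_trans lnu).
set w := (1 - ln u) `^ (- bet) in hk.
have w0 : 0 < w by exact: powR_gt0.
have up0 : 0 < u `^ p^-1 by exact: powR_gt0.
have H : (g s * (u `^ p^-1 * w)%:E <= k%:E)%E.
  rewrite EFinM muleA; apply: le_trans hk; rewrite muleC.
  by apply: lee_wpmul2l => //; rewrite lee_fin ltW.
rewrite -lee_pdivlMr ?mulr_gt0// in H.
apply: (le_trans H); rewrite -EFinM lee_fin le_eqVlt; apply: predU1l.
rewrite /w powRN /u powRM ?invr_ge0 ?ltW// powRV// powRN.
have h1 : 0 < s `^ p^-1 by exact: powR_gt0.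
have h2 : 0 < 2 `^ p^-1 by exact: powR_gt0.
have h3 : 0 < (1 - ln (s / 2)) `^ bet by exact: powR_gt0.
by field; rewrite !gt_eqF.
Qed.

Lemma tail_bound_powR (del s T : R) : 0 < del -> 0 < s -> s <= T -> T < 1 ->
  (g s <= (k * tail_const p bet del * ((1 - ln T) `^ bet * T `^ del) *
           s `^ (- (p^-1 + del)))%:E)%E.
Proof.
move=> d0 s0 sT T1; have k0 := tail_bound_ge0.
apply: (le_trans (tail_bound_pointwise _)); first by rewrite s0 (le_lt_trans sT T1).
have hlog := one_sub_ln_half_powR_le bet_gt0 d0 s0 sT T1.
rewrite lee_fin; apply: (le_trans (ler_wpM2l _ hlog)); first by rewrite !mulr_ge0 ?powR_ge0.
have hs : s `^ (- p^-1) * s `^ (- del) = s `^ (- (p^-1 + del)).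
  by rewrite -powRD ?opprD// (gt_eqF s0) implybT.
by rewrite -hs /tail_const le_eqVlt; apply: predU1l; ring.
Qed.

Lemma tail_bound_integral (del T : R) : 0 < del -> p^-1 + del < 1 -> 0 < T -> T < 1 ->
  (\int[mu]_(s in `]0%R, T[) g s <=
   (k * (tail_const p bet del / (1 - (p^-1 + del))) * (1 - ln T) `^ bet *
    T `^ (1 - p^-1))%:E)%E.
Proof.
move=> d0 b1 T0 T1; have k0 := tail_bound_ge0.
set b := p^-1 + del; set c := k * tail_const p bet del * ((1 - ln T) `^ bet * T `^ del).
apply: (@le_trans _ _ (\int[mu]_(s in `]0%R, T[) (c * s `^ (- b))%:E)%E).
  apply: ge0_le_integral_nomeas => s; first by move=> _; exact: g_ge0.
  by rewrite /= in_itv/= => /andP[s0 sT]; exact: tail_bound_powR d0 s0 (ltW sT) T1.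
apply: (le_trans (integral_mul_powR_itv0_le _ b1 T0)).
  by rewrite /c !mulr_ge0 ?powR_ge0 ?(ltW (tail_const_gt0 _ bet_gt0 d0)).
have -> : T `^ (1 - p^-1) = T `^ del * T `^ (1 - b).
  by rewrite -powRD ?(gt_eqF T0) ?implybT// /b; congr (_ `^ _); ring.
by rewrite lee_fin /c le_eqVlt; apply: predU1l; ring.
Qed.

Lemma tail_bound_weighted_integral (del t : R) :
  0 < del -> p^-1 + del < 1 -> 0 < t < 1 ->
  ((t^-1 * (1 - ln t) `^ (- bet))%:E *
     \int[mu]_(s in `]0%R, (t `^ (p / (p - 1)))%R[) g s <=
   (tail_const p bet del / (1 - (p^-1 + del)) * (p / (p - 1)) `^ bet * k)%:E)%E.
Proof.
move=> d0 b1 /andP[t0 t1]; have k0 := tail_bound_ge0.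
set sigma := p / (p - 1); set C := tail_const p bet del / (1 - (p^-1 + del)).
have C0 : 0 <= C by rewrite divr_ge0 ?subr_ge0 ?ltW// tail_const_gt0.
have sigma_ge1 : 1 <= sigma by rewrite ler_pdivlMr ?subr_gt0// mul1r gerBl.
have lnt : ln t < 0 by rewrite ln_lt0// t0 t1.
have lt_gt0 : 0 < 1 - ln t by lra.
set T := t `^ sigma.
have T0 : 0 < T by exact: powR_gt0.
have T1 : T < 1.
  by rewrite /T gt0_powRE// -expR0 ltr_expR pmulr_rlt0// (lt_le_trans ltr01).
have Tt : T `^ (1 - p^-1) = t.
  rewrite /T -powRrM (_ : sigma * (1 - p^-1) = 1) ?powRr1 ?ltW// /sigma.
  by field; rewrite subr_eq0 !gt_eqF.
have lnT : ln T = sigma * ln t by rewrite ln_powR.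
have hT : (1 - ln T) `^ bet <= sigma `^ bet * (1 - ln t) `^ bet.
  have sigma_ge0 : 0 <= sigma by lra.
  rewrite -powRM ?(ltW lt_gt0)//; apply: ge0_ler_powR; rewrite ?nnegrE ?(ltW bet_gt0)//.
  - by rewrite lnT; nra.
  - by rewrite mulr_ge0 ?(ltW lt_gt0).
  - by rewrite lnT mulrBr mulr1; lra.
apply: (le_trans (lee_wpmul2l _ (tail_bound_integral d0 b1 T0 T1))).
  by rewrite lee_fin mulr_ge0 ?powR_ge0// invr_ge0 ltW.
rewrite -EFinM lee_fin Tt.
have -> : t^-1 * (1 - ln t) `^ (- bet) * (k * C * (1 - ln T) `^ bet * t) =
          k * C * (1 - ln t) `^ (- bet) * (1 - ln T) `^ bet.
  by field; rewrite gt_eqF.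
apply: (le_trans (ler_wpM2l _ hT)); first exact: mulr_ge0 (mulr_ge0 k0 C0) (powR_ge0 _ _).
rewrite le_eqVlt; apply: predU1l; rewrite powRN.
by field; rewrite gt_eqF// powR_gt0.
Qed.

End nonincreasing_tail_bound.

Section decr_rearr.
Context d (T : measurableType d) (R : realType).
Variables (mu : {measure set T -> \bar R}) (D : set T) (f : T -> R).

Lemma decr_rearr_ge0 (s : R) : (0 <= decr_rearr mu D f s)%E.
Proof. by apply: le_ereal_inf_tmp => _ [lam [lam0 _] <-]; rewrite lee_fin. Qed.

Lemma decr_rearr_nonincr (s s' : R) : s <= s' ->
  (decr_rearr mu D f s' <= decr_rearr mu D f s)%E.
Proof.
move=> ss'; apply: ereal_inf_le_tmp => _ [lam [lam0 h] <-]; exists lam => //.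
by split => //; apply: le_trans h _; rewrite lee_fin.
Qed.

End decr_rearr.

Theorem lemma3p1 (R : realType) (p alpha : R) (hp : 1 < p) (halpha : 0 < alpha) :
  let sigma := p / (p - 1) in
  exists c : R, 0 < c /\
  forall (d : measure_display) (T : measurableType d)
         (mu : {measure set T -> \bar R}) (Omega : set T),
    measurable Omega -> mu Omega = 1%E ->
  forall f : T -> R, measurable_fun Omega f ->
  (ereal_sup [set ((t^-1 * (1 - ln t) `^ (- (alpha / p)))%R%:E *
                   \int[lebesgue_measure]_(s in `]0%R, (t `^ sigma)%R[) decr_rearr mu Omega f s)%E
             | t in `]0%R, 1%R[]
   <= c%:E *
      ereal_sup [set (((1 - ln t) `^ (- (alpha / p)))%R%:E *
                   (\int[lebesgue_measure]_(s in `]t, 1%R[) (decr_rearr mu Omega f s `^ p))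
                     `^ p^-1%R)%E
             | t in `]0%R, 1%R[])%E.
Proof.
move=> sigma; have p_gt0 : 0 < p := lt_trans ltr01 hp.
have pV_lt1 : p^-1 < 1 by rewrite invf_lt1.
set bet := alpha / p; set del := (1 - p^-1) / 2.
have bet_gt0 : 0 < bet by rewrite divr_gt0.
have del_gt0 : 0 < del by rewrite divr_gt0// subr_gt0.
have b_lt1 : p^-1 + del < 1 by rewrite /del; lra.
set c := tail_const p bet del / (1 - (p^-1 + del)) * sigma `^ bet.
have c_gt0 : 0 < c.
  by rewrite mulr_gt0 ?powR_gt0 ?divr_gt0 ?tail_const_gt0 ?subr_gt0.
exists c; split => // d T mu Omega _ _ f _.
match goal with |- context [(c%:E * ?X)%E] => set K := X end.
have K_ge0 : (0 <= K)%E.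
  apply: le_trans (ereal_sup_ubound _); last by exists 2^-1; rewrite //= in_itv/=
    invr_gt0 ltr0n invf_lt1 ?ltr1n.
  by rewrite mule_ge0 ?poweR_ge0// lee_fin powR_ge0.
have [->|K_neq_y] := eqVneq K +oo%E; first by rewrite gt0_muley ?leey ?lte_fin.
have Kk : K = (fine K)%:E by rewrite fineK// ge0_fin_numE// ltey.
rewrite Kk; apply: ge_ereal_sup => _ [t t01 <-]; rewrite -EFinM.
apply: tail_bound_weighted_integral => //.
- exact: decr_rearr_ge0.
- exact: decr_rearr_nonincr.
- by move=> u u01; rewrite -Kk; apply: ereal_sup_ubound; exists u.
Qed.
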